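(* Let $q,s\in\mathbb{H}$ with $qs\neq sq$ and $|q|<|s|$. Then $q\neq\bar s$ (so $s+q-2\,\mathrm{Re}[s]=q-\bar s\neq 0$), and the element $$S(s,q)=(s+q-2\,\mathrm{Re}[s])^{-1}(sq-|s|^2)-q=-(q-\bar s)^{-1}\big(q^2-2q\,\mathrm{Re}[s]+|s|^2\big)$$ (the two expressions being equal) is the two-sided inverse of $S^{-1}(s,q)=\sum_{n\ge0} q^n s^{-1-n}$; in particular it is a solution of $S^2+Sq-sS=0$.
   Context: $\mathbb{H}$ denotes the algebra of quaternions; $\bar s$ is the conjugate, $|s|^2=s\bar s$, $\mathrm{Re}[s]$ the real part. *)

From Stdlib Require Import Reals Lra.
Open Scope R_scope.

Record quat : Type := mkQ { qr : R; qi : R; qj : R; qk : R }.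

Definition qreal (a : R) : quat := mkQ a 0 0 0.
Definition q0 : quat := qreal 0.
Definition q1 : quat := qreal 1.

Definition qadd (x y : quat) : quat :=
  mkQ (qr x + qr y) (qi x + qi y) (qj x + qj y) (qk x + qk y).
Definition qopp (x : quat) : quat := mkQ (- qr x) (- qi x) (- qj x) (- qk x).
Definition qsub (x y : quat) : quat := qadd x (qopp y).

(* Hamilton product: i^2 = j^2 = k^2 = ijk = -1 *)
Definition qmul (x y : quat) : quat :=
  mkQ (qr x * qr y - qi x * qi y - qj x * qj y - qk x * qk y)
      (qr x * qi y + qi x * qr y + qj x * qk y - qk x * qj y)
      (qr x * qj y - qi x * qk y + qj x * qr y + qk x * qi y)
      (qr x * qk y + qi x * qj y - qj x * qi y + qk x * qr y).

Definition qconj (x : quat) : quat := mkQ (qr x) (- qi x) (- qj x) (- qk x).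
Definition qnorm2 (x : quat) : R := qr x ^ 2 + qi x ^ 2 + qj x ^ 2 + qk x ^ 2.
Definition qabs (x : quat) : R := sqrt (qnorm2 x).
Definition qre (x : quat) : R := qr x.
Definition qscale (a : R) (x : quat) : quat := mkQ (a * qr x) (a * qi x) (a * qj x) (a * qk x).
(* inverse x^{-1} = \bar x / |x|^2  (total; equals 0 at 0) *)
Definition qinv (x : quat) : quat := qscale (/ qnorm2 x) (qconj x).

Fixpoint qpow (x : quat) (n : nat) : quat :=
  match n with O => q1 | S m => qmul x (qpow x m) end.

Fixpoint qsum (f : nat -> quat) (N : nat) : quat :=
  match N with O => f O | S m => qadd (qsum f m) (f (S m)) end.

Definition quat_cv (u : nat -> quat) (l : quat) : Prop :=
  forall eps : R, eps > 0 -> exists N : nat, forall n : nat, (n >= N)%nat ->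
    qabs (qsub (u n) l) < eps.

Definition Sinv_partial (s q : quat) (N : nat) : quat :=
  qsum (fun n => qmul (qpow q n) (qpow (qinv s) (S n))) N.

From Stdlib Require Import Reals Lra.
Open Scope R_scope.

(* Proof of Theorem 3.5.  Write  T(X) = qX - Xs  (the Sylvester operator),
   Q = q^2 - 2 Re[s] q + |s|^2  (the characteristic polynomial of s evaluated
   at q) and  d = q - \bar s.  The argument rests on three identities:
   - Q X = q T(X) - T(X) \bar s  for every X, so that T is invertible
     whenever Q <> 0, which holds as soon as |q| < |s|;
   - T(q^n s^{-1-n}) = q^{n+1} s^{-n-1} - q^n s^{-n}, hence the partial sums
     P_N of S^{-1}(s,q) telescope to  T(P_N) = q^{N+1} s^{-N-1} - 1;
   - T(L) = -1 for  L = -Q^{-1} d,  because Q commutes with q and T(d) = Q.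
   Inverting T, P_N - L = Q^{-1}(q E - E \bar s) with |E| = (|q|/|s|)^{N+1},
   so P_N converges geometrically to L.  Finally S(s,q) = -d^{-1} Q is
   visibly the two-sided inverse of L, and conjugating T(L) = -1 by S
   gives  S^2 + Sq - sS = 0. *)

Lemma quat_ext x y :
  qr x = qr y -> qi x = qi y -> qj x = qj y -> qk x = qk y -> x = y.
Proof. destruct x, y; simpl; intros; subst; reflexivity. Qed.

(* Proves a polynomial identity between quaternion expressions componentwise;
   inverses [qinv _] and powers [qpow _ _] are treated as opaque atoms. *)
Ltac quat_ring :=
  apply quat_ext;
  unfold q0, q1, qsub, qadd, qopp, qmul, qconj, qscale, qreal, qnorm2, qre;
  cbn [qr qi qj qk]; ring.

Lemma qmul_assoc a b c : qmul (qmul a b) c = qmul a (qmul b c).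
Proof. quat_ring. Qed.

Lemma qmul_1_l x : qmul q1 x = x.
Proof. quat_ring. Qed.

Lemma qmul_1_r x : qmul x q1 = x.
Proof. quat_ring. Qed.

Lemma qmul_opp_l a b : qmul (qopp a) b = qopp (qmul a b).
Proof. quat_ring. Qed.

Lemma qmul_opp_r a b : qmul a (qopp b) = qopp (qmul a b).
Proof. quat_ring. Qed.

Lemma qmul_sub_distr_l a b c : qmul a (qsub b c) = qsub (qmul a b) (qmul a c).
Proof. quat_ring. Qed.

Lemma qmul_sub_distr_r a b c : qmul (qsub a b) c = qsub (qmul a c) (qmul b c).
Proof. quat_ring. Qed.

Lemma qadd_sub_assoc a b c : qsub (qadd a b) c = qadd a (qsub b c).
Proof. quat_ring. Qed.

Lemma qadd_opp_r a : qadd a (qopp a) = q0.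
Proof. quat_ring. Qed.

Lemma qpow_comm x n : qmul x (qpow x n) = qmul (qpow x n) x.
Proof.
  induction n as [|n IH]; simpl.
  - rewrite qmul_1_l, qmul_1_r; reflexivity.
  - rewrite IH at 1. rewrite <- qmul_assoc, IH. reflexivity.
Qed.

Lemma qnorm2_nonneg x : 0 <= qnorm2 x.
Proof. unfold qnorm2; nra. Qed.

Lemma qnorm2_eq0 x : qnorm2 x = 0 -> x = q0.
Proof.
  destruct x as [a b c d]; unfold qnorm2; simpl; intro H.
  apply quat_ext; simpl; nra.
Qed.

Lemma qnorm2_mul x y : qnorm2 (qmul x y) = qnorm2 x * qnorm2 y.
Proof. unfold qnorm2, qmul; simpl; ring. Qed.

Lemma qnorm2_pow x n : qnorm2 (qpow x n) = qnorm2 x ^ n.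
Proof.
  induction n as [|n IH]; simpl.
  - unfold qnorm2, q1, qreal; simpl; ring.
  - rewrite qnorm2_mul, IH; reflexivity.
Qed.

Lemma qnorm2_conj x : qnorm2 (qconj x) = qnorm2 x.
Proof. unfold qnorm2, qconj; simpl; ring. Qed.

Lemma qnorm2_inv x : qnorm2 x <> 0 -> qnorm2 (qinv x) = / qnorm2 x.
Proof.
  intro H; unfold qinv, qscale, qconj, qnorm2 in *; simpl.
  field; contradict H; simpl in H |- *; lra.
Qed.

Lemma qnorm2_sub_le x y : qnorm2 (qsub x y) <= 2 * (qnorm2 x + qnorm2 y).
Proof.
  unfold qnorm2, qsub, qadd, qopp; simpl.
  pose proof (pow2_ge_0 (qr x + qr y)); pose proof (pow2_ge_0 (qi x + qi y)).
  pose proof (pow2_ge_0 (qj x + qj y)); pose proof (pow2_ge_0 (qk x + qk y)).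
  nra.
Qed.

Lemma qsub_eq0 x y : qsub x y = q0 -> x = y.
Proof.
  intro E. pose proof (f_equal qr E); pose proof (f_equal qi E).
  pose proof (f_equal qj E); pose proof (f_equal qk E).
  unfold qsub, qadd, qopp, q0, qreal in *; simpl in *.
  apply quat_ext; lra.
Qed.

Lemma qinv_l x : qnorm2 x <> 0 -> qmul (qinv x) x = q1.
Proof.
  intro H. apply quat_ext; unfold q1, qreal, qinv, qscale, qconj, qmul, qnorm2 in *;
  simpl; field; contradict H; simpl in H |- *; lra.
Qed.

Lemma qinv_r x : qnorm2 x <> 0 -> qmul x (qinv x) = q1.
Proof.
  intro H. apply quat_ext; unfold q1, qreal, qinv, qscale, qconj, qmul, qnorm2 in *;
  simpl; field; contradict H; simpl in H |- *; lra.
Qed.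

(* Whatever commutes with b commutes with b^{-1}, since b^{-1} is a real
   combination of 1 and b (\bar b = 2 Re[b] - b). *)
Lemma qinv_comm a b : qmul a b = qmul b a -> qmul a (qinv b) = qmul (qinv b) a.
Proof.
  intro H.
  replace (qmul a (qinv b)) with
    (qscale (/ qnorm2 b) (qsub (qscale (2 * qr b) a) (qmul a b))) by
    (apply quat_ext; unfold qinv, qscale, qsub, qadd, qopp, qconj, qmul;
     simpl; ring).
  rewrite H.
  apply quat_ext; unfold qinv, qscale, qsub, qadd, qopp, qconj, qmul;
  simpl; ring.
Qed.

Lemma qopp_inv_pair a b : qnorm2 a <> 0 -> qnorm2 b <> 0 ->
  qmul (qopp (qmul (qinv a) b)) (qopp (qmul (qinv b) a)) = q1.
Proof.
  intros Ha Hb.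
  replace (qmul (qopp (qmul (qinv a) b)) (qopp (qmul (qinv b) a))) with
    (qmul (qinv a) (qmul (qmul b (qinv b)) a)) by quat_ring.
  rewrite qinv_r, qmul_1_l, qinv_l by assumption. reflexivity.
Qed.

Definition sylvester (q s X : quat) : quat := qsub (qmul q X) (qmul X s).

Definition charpoly_at (s q : quat) : quat :=
  qadd (qsub (qmul q q) (qscale (2 * qre s) q)) (qreal (qnorm2 s)).

Lemma sylvester_add q s X Y :
  sylvester q s (qadd X Y) = qadd (sylvester q s X) (sylvester q s Y).
Proof. unfold sylvester; quat_ring. Qed.

(* Q X = q T(X) - T(X) \bar s : a left inverse of T up to the factor Q. *)
Lemma charpoly_sylvester q s X :
  qmul (charpoly_at s q) X
  = qsub (qmul q (sylvester q s X)) (qmul (sylvester q s X) (qconj s)).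
Proof. unfold charpoly_at, sylvester; quat_ring. Qed.

Lemma sylvester_solve q s X : qnorm2 (charpoly_at s q) <> 0 ->
  X = qmul (qinv (charpoly_at s q))
        (qsub (qmul q (sylvester q s X)) (qmul (sylvester q s X) (qconj s))).
Proof.
  intro HQ. rewrite <- charpoly_sylvester, <- qmul_assoc, qinv_l by exact HQ.
  symmetry; apply qmul_1_l.
Qed.

Lemma charpoly_comm q s : qmul q (charpoly_at s q) = qmul (charpoly_at s q) q.
Proof. unfold charpoly_at; quat_ring. Qed.

Lemma sylvester_conj_diff q s : sylvester q s (qsub q (qconj s)) = charpoly_at s q.
Proof. unfold sylvester, charpoly_at; quat_ring. Qed.

Lemma charpoly_root_norm q s : charpoly_at s q = q0 -> qnorm2 q = qnorm2 s.
Proof.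
  intro H0.
  pose proof (f_equal qr H0) as Hr; pose proof (f_equal qi H0) as Hi;
  pose proof (f_equal qj H0) as Hj; pose proof (f_equal qk H0) as Hk.
  destruct q as [a b c d], s as [e f g h].
  unfold charpoly_at, qadd, qsub, qopp, qmul, qscale, qreal, qre, qnorm2, q0
    in *; simpl in *.
  destruct (Req_dec a e) as [Hae|Hae].
  - subst e. nra.
  - (* the vector part 2 (a - e) v vanishes, so q is real and equals Re[s] *)
    assert (b = 0) by (apply (Rmult_eq_reg_l (2 * (a - e))); lra).
    assert (c = 0) by (apply (Rmult_eq_reg_l (2 * (a - e))); lra).
    assert (d = 0) by (apply (Rmult_eq_reg_l (2 * (a - e))); lra).
    subst b c d. exfalso.
    assert (0 < (a - e) * (a - e)) by (apply Rsqr_pos_lt; lra). nra.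
Qed.

Lemma charpoly_nonzero q s : qnorm2 q < qnorm2 s -> qnorm2 (charpoly_at s q) <> 0.
Proof.
  intros Hlt H0. apply qnorm2_eq0, charpoly_root_norm in H0. lra.
Qed.

Lemma sylvester_series_term q s n : qnorm2 s <> 0 ->
  sylvester q s (qmul (qpow q n) (qpow (qinv s) (S n)))
  = qsub (qmul (qpow q (S n)) (qpow (qinv s) (S n)))
         (qmul (qpow q n) (qpow (qinv s) n)).
Proof.
  intro Hs. unfold sylvester. f_equal.
  - rewrite <- qmul_assoc; reflexivity.
  - change (qpow (qinv s) (S n)) with (qmul (qinv s) (qpow (qinv s) n)).
    rewrite qpow_comm, !qmul_assoc, qinv_l, qmul_1_r by exact Hs.
    reflexivity.
Qed.

Lemma sylvester_partial q s N : qnorm2 s <> 0 ->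
  sylvester q s (Sinv_partial s q N)
  = qsub (qmul (qpow q (S N)) (qpow (qinv s) (S N))) q1.
Proof.
  intro Hs. induction N as [|N IH].
  - change (Sinv_partial s q 0) with (qmul (qpow q 0) (qpow (qinv s) 1)).
    rewrite sylvester_series_term by exact Hs.
    change (qmul (qpow q 0) (qpow (qinv s) 0)) with (qmul q1 q1).
    rewrite qmul_1_l. reflexivity.
  - change (Sinv_partial s q (S N)) with
      (qadd (Sinv_partial s q N) (qmul (qpow q (S N)) (qpow (qinv s) (S (S N))))).
    rewrite sylvester_add, IH, sylvester_series_term by exact Hs.
    generalize (qmul (qpow q (S N)) (qpow (qinv s) (S N))),
               (qmul (qpow q (S (S N))) (qpow (qinv s) (S (S N)))).
    intros E E'; quat_ring.
Qed.

Definition Sinv_limit (s q : quat) : quat :=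
  qopp (qmul (qinv (charpoly_at s q)) (qsub q (qconj s))).

Lemma sylvester_limit q s : qnorm2 (charpoly_at s q) <> 0 ->
  sylvester q s (Sinv_limit s q) = qopp q1.
Proof.
  intro HQ. unfold Sinv_limit.
  pose proof (qinv_comm _ _ (charpoly_comm q s)) as Hcomm.
  transitivity (qopp (qmul (qinv (charpoly_at s q))
                           (sylvester q s (qsub q (qconj s))))).
  - unfold sylvester.
    rewrite qmul_opp_r, qmul_opp_l, <- qmul_assoc, Hcomm, !qmul_assoc,
            (qmul_sub_distr_l (qinv (charpoly_at s q))).
    generalize (qmul (qinv (charpoly_at s q)) (qmul q (qsub q (qconj s)))),
               (qmul (qinv (charpoly_at s q)) (qmul (qsub q (qconj s)) s)).
    intros A B; quat_ring.
  - rewrite sylvester_conj_diff, qinv_l by exact HQ. reflexivity.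
Qed.

Lemma Sinv_partial_error q s N :
  qnorm2 s <> 0 -> qnorm2 (charpoly_at s q) <> 0 ->
  qsub (Sinv_partial s q N) (Sinv_limit s q)
  = qmul (qinv (charpoly_at s q))
      (qsub (qmul q (qmul (qpow q (S N)) (qpow (qinv s) (S N))))
            (qmul (qmul (qpow q (S N)) (qpow (qinv s) (S N))) (qconj s))).
Proof.
  intros Hs HQ.
  rewrite (sylvester_solve q s (Sinv_partial s q N)), sylvester_partial by assumption.
  unfold Sinv_limit.
  generalize (qinv (charpoly_at s q)), (qmul (qpow q (S N)) (qpow (qinv s) (S N))).
  intros Qi E.
  replace (qsub (qmul q (qsub E q1)) (qmul (qsub E q1) (qconj s)))
    with (qsub (qsub (qmul q E) (qmul E (qconj s))) (qsub q (qconj s)))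
    by quat_ring.
  rewrite qmul_sub_distr_l.
  generalize (qmul Qi (qsub (qmul q E) (qmul E (qconj s)))),
             (qmul Qi (qsub q (qconj s))).
  intros A B; quat_ring.
Qed.

Lemma Sinv_partial_error_bound q s N :
  qnorm2 s <> 0 -> qnorm2 (charpoly_at s q) <> 0 ->
  qnorm2 (qsub (Sinv_partial s q N) (Sinv_limit s q))
  <= qnorm2 (qinv (charpoly_at s q)) * (2 * (qnorm2 q + qnorm2 s))
     * (qnorm2 q / qnorm2 s) ^ S N.
Proof.
  intros Hs HQ.
  rewrite Sinv_partial_error by assumption.
  set (E := qmul (qpow q (S N)) (qpow (qinv s) (S N))).
  assert (HE : qnorm2 E = (qnorm2 q / qnorm2 s) ^ S N).
  { unfold E. rewrite qnorm2_mul, !qnorm2_pow, qnorm2_inv by exact Hs.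
    unfold Rdiv; rewrite Rpow_mult_distr; reflexivity. }
  pose proof (qnorm2_sub_le (qmul q E) (qmul E (qconj s))) as Hsub.
  rewrite !qnorm2_mul, qnorm2_conj, HE in Hsub.
  rewrite qnorm2_mul, Rmult_assoc.
  apply Rmult_le_compat_l; [apply qnorm2_nonneg|].
  lra.
Qed.

Lemma quat_cv_geometric (u : nat -> quat) (l : quat) (K x : R) :
  0 <= K -> 0 <= x < 1 ->
  (forall n, qnorm2 (qsub (u n) l) <= K * x ^ n) -> quat_cv u l.
Proof.
  intros HK [Hx0 Hx1] Hbound eps Heps.
  set (y := eps * eps / (K + 1)).
  assert (Hy : 0 < y) by (apply Rdiv_lt_0_compat; nra).
  assert (Hyk : (K + 1) * y = eps * eps) by (unfold y; field; lra).
  destruct (pow_lt_1_zero x ltac:(rewrite Rabs_right; lra) y Hy) as [N HN].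
  exists N; intros n Hn.
  specialize (HN n Hn). rewrite Rabs_right in HN by (apply Rle_ge, pow_le; lra).
  assert (Hsmall : qnorm2 (qsub (u n) l) < eps * eps)
    by (pose proof (Hbound n); nra).
  unfold qabs. rewrite <- (sqrt_square eps) by lra.
  apply sqrt_lt_1_alt; split; [apply qnorm2_nonneg | exact Hsmall].
Qed.

Lemma Sinv_series_cv q s : qnorm2 q < qnorm2 s ->
  quat_cv (Sinv_partial s q) (Sinv_limit s q).
Proof.
  intro Hlt.
  pose proof (qnorm2_nonneg q) as Hq0.
  assert (Hs : 0 < qnorm2 s) by lra.
  set (x := qnorm2 q / qnorm2 s).
  set (C := qnorm2 (qinv (charpoly_at s q)) * (2 * (qnorm2 q + qnorm2 s))).
  assert (Hx : 0 <= x < 1).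
  { unfold x; split.
    - apply Rmult_le_pos; [lra | left; apply Rinv_0_lt_compat; lra].
    - apply (Rmult_lt_reg_r (qnorm2 s)); [lra|].
      unfold Rdiv; rewrite Rmult_assoc, Rinv_l by lra; lra. }
  assert (HC : 0 <= C).
  { unfold C; pose proof (qnorm2_nonneg (qinv (charpoly_at s q))); nra. }
  apply (quat_cv_geometric _ _ (C * x) x); [nra | exact Hx |].
  intro n. replace (C * x * x ^ n) with (C * x ^ S n) by (simpl; ring).
  apply Sinv_partial_error_bound; [lra | exact (charpoly_nonzero q s Hlt)].
Qed.

(* If S and L are mutually inverse and T(L) = -1, then S^2 + Sq - sS = 0:
   multiply qL - Ls + 1 = 0 by S on both sides. *)
Lemma inverse_of_sylvester_solution q s S L :
  qmul S L = q1 -> qmul L S = q1 -> sylvester q s L = qopp q1 ->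
  qsub (qadd (qmul S S) (qmul S q)) (qmul s S) = q0.
Proof.
  intros HSL HLS HT.
  assert (HSq : qmul S q = qmul (qmul S (qmul q L)) S)
    by (rewrite !qmul_assoc, HLS, qmul_1_r; reflexivity).
  assert (HsS : qmul s S = qmul (qmul S (qmul L s)) S)
    by (rewrite <- (qmul_assoc S L s), HSL, qmul_1_l; reflexivity).
  rewrite HSq, HsS, qadd_sub_assoc, <- qmul_sub_distr_r, <- qmul_sub_distr_l.
  fold (sylvester q s L).
  rewrite HT, qmul_opp_r, qmul_1_r, qmul_opp_l.
  apply qadd_opp_r.
Qed.

Lemma shifted_sum_eq q s : qsub (qadd s q) (qreal (2 * qre s)) = qsub q (qconj s).
Proof. quat_ring. Qed.

Lemma S_formula q s : qnorm2 (qsub q (qconj s)) <> 0 ->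
  qsub (qmul (qinv (qsub q (qconj s))) (qsub (qmul s q) (qreal (qnorm2 s)))) q
  = qopp (qmul (qinv (qsub q (qconj s))) (charpoly_at s q)).
Proof.
  intro Hd.
  rewrite <- (qmul_1_l q) at 3. rewrite <- (qinv_l _ Hd).
  rewrite qmul_assoc, <- qmul_sub_distr_l, <- qmul_opp_r.
  f_equal. unfold charpoly_at; quat_ring.
Qed.

Theorem theorem3p5 (q s : quat)
  (hnc : qmul q s <> qmul s q) (hlt : qabs q < qabs s) :
  q <> qconj s /\
  qsub (qadd s q) (qreal (2 * qre s)) <> q0 /\
  (* the two expressions for S(s,q) agree *)
  qsub (qmul (qinv (qsub (qadd s q) (qreal (2 * qre s))))
             (qsub (qmul s q) (qreal (qnorm2 s)))) q
  = qopp (qmul (qinv (qsub q (qconj s)))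
               (qadd (qsub (qmul q q) (qscale (2 * qre s) q)) (qreal (qnorm2 s)))) /\
  (* S(s,q) is the two-sided inverse of the (convergent) series S^{-1}(s,q) *)
  exists L : quat,
    quat_cv (Sinv_partial s q) L /\
    (let Ssq := qsub (qmul (qinv (qsub (qadd s q) (qreal (2 * qre s))))
                           (qsub (qmul s q) (qreal (qnorm2 s)))) q in
     qmul Ssq L = q1 /\ qmul L Ssq = q1 /\
     qsub (qadd (qmul Ssq Ssq) (qmul Ssq q)) (qmul s Ssq) = q0).
Proof.
  assert (Hlt : qnorm2 q < qnorm2 s) by (apply sqrt_lt_0_alt; exact hlt).
  assert (Hne : q <> qconj s) by (intro E; rewrite E, qnorm2_conj in Hlt; lra).
  assert (Hd : qsub q (qconj s) <> q0) by (intro E; apply Hne, qsub_eq0, E).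
  assert (Hnd : qnorm2 (qsub q (qconj s)) <> 0) by (intro E; apply Hd, qnorm2_eq0, E).
  assert (HQ := charpoly_nonzero q s Hlt).
  fold (charpoly_at s q).
  rewrite shifted_sum_eq, S_formula by exact Hnd.
  split; [exact Hne|]. split; [exact Hd|]. split; [reflexivity|].
  exists (Sinv_limit s q). split; [exact (Sinv_series_cv q s Hlt)|].
  cbv zeta. unfold Sinv_limit at 1 2.
  pose proof (qopp_inv_pair _ _ Hnd HQ) as HSL.
  pose proof (qopp_inv_pair _ _ HQ Hnd) as HLS.
  split; [exact HSL|]. split; [exact HLS|].
  apply (inverse_of_sylvester_solution q s _ (Sinv_limit s q) HSL HLS).
  exact (sylvester_limit q s HQ).
Qed.
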